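(* Let $K\ge1$, $g_1,\dots,g_K$ probability densities on $\mathbb{R}^d$ (finite at the data points), and $x_1,\dots,x_N\in\mathbb{R}^d$. Suppose $(\pi_1,\dots,\pi_K)$ is an optimal solution of $$\max_{\pi'}\ \sum_{n=1}^N\log\Big(\sum_{k=1}^K\pi'_k g_k(x_n)\Big)\quad\text{s.t.}\quad \pi'_1,\dots,\pi'_K\ge0,\ \sum_{k=1}^K\pi'_k=1,$$ and that $f=\sum_k\pi_kg_k$ satisfies $0<f(x_n)<\infty$ for all $n$. Then $$0\le \mathrm{MC}(\{\pi_k,g_k\}_{k=1}^K;\{x_n\}_{n=1}^N)\le\log K.$$
   Context: For mixture weights $\pi_k\ge 0$ summing to one, densities $g_k$, $f=\sum_k \pi_k g_k$, and data $x_1,\dots,x_N$ with $0<f(x_n)<\infty$ for all $n$, the mixture complexity is $$\mathrm{MC}(\{\pi_k,g_k\}_{k=1}^K;\{x_n\}_{n=1}^N)=\frac1N\sum_{n=1}^N\sum_{k=1}^K\frac{\pi_k g_k(x_n)}{f(x_n)}\log\frac{g_k(x_n)}{f(x_n)},$$ with the convention that a term with $\pi_k g_k(x_n)=0$ equals $0$. *)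

From mathcomp Require Import all_boot all_order all_algebra.
From mathcomp Require Import all_classical all_reals all_analysis.
Set Implicit Arguments. Unset Strict Implicit. Unset Printing Implicit Defensive.
Import Order.TTheory GRing.Theory Num.Theory.
Local Open Scope ring_scope.

Definition in_simplex (R : realType) (K : nat) (p : 'I_K -> R) : Prop :=
  (forall k, 0 <= p k) /\ \sum_(k < K) p k = 1.

Definition mixture (R : realType) (d K : nat) (p : 'I_K -> R)
  (g : 'I_K -> 'rV[R]_d -> R) (x : 'rV[R]_d) : R :=
  \sum_(k < K) p k * g k x.

Definition elog (R : realType) (y : R) : \bar R :=
  if 0 < y then (ln y)%:E else -oo%E.

Definition loglik (R : realType) (d K N : nat) (g : 'I_K -> 'rV[R]_d -> R)
  (x : 'I_N -> 'rV[R]_d) (p : 'I_K -> R) : \bar R :=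
  (\sum_(n < N) elog (mixture p g (x n)))%E.

Definition MC (R : realType) (d K N : nat) (p : 'I_K -> R)
  (g : 'I_K -> 'rV[R]_d -> R) (x : 'I_N -> 'rV[R]_d) : R :=
  N%:R^-1 * \sum_(n < N) \sum_(k < K)
     (if p k * g k (x n) == 0 then 0
      else p k * g k (x n) / mixture p g (x n) * ln (g k (x n) / mixture p g (x n))).

From mathcomp Require Import all_boot all_order all_algebra.
From mathcomp Require Import all_classical all_reals all_analysis.
From mathcomp Require Import ring lra.
Import Order.TTheory GRing.Theory Num.Theory.
Set Implicit Arguments. Unset Strict Implicit. Unset Printing Implicit Defensive.
Local Open Scope ring_scope.

(* For a data point with component values G_k >= 0 and mixture value
   F = sum_k p_k G_k > 0, the responsibilities r_k = p_k G_k / F form a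
   probability vector, and MC is the average over the data of
   S = sum_k r_k ln (G_k / F).
   - Lower bound: r_k ln (G_k / F) >= r_k - p_k by ln t <= t - 1, hence S >= 0.
   - Upper bound: for any weights q with mixture value F_q > 0 and q_k > 0
     wherever r_k > 0, the term q_k G_k / F_q lies in (0, 1], so its logarithm
     is nonpositive; this gives S <= - sum_k r_k ln q_k + ln F_q - ln F.
   Choosing q = the average responsibility over the data (a point of the
   simplex), summing over the N points turns the first term into N times the
   entropy of q, which is at most N ln K, while optimality of p makes
   sum_n (ln F_q(x_n) - ln F(x_n)) nonpositive.  Dividing by N gives
   0 <= MC <= ln K. *)

Section LogInequalities.
Variable R : realType.

Lemma ln_le_subr1 {t : R} : 0 < t -> ln t <= t - 1.
Proof.
move=> t_gt0; have := @le_ln1Dx R (t - 1); rewrite subrKC; apply; lra.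
Qed.

Lemma entropy_le_ln_card (I : finType) (q : I -> R) :
  (forall i, 0 <= q i) -> \sum_i q i = 1 -> - \sum_i q i * ln (q i) <= ln #|I|%:R.
Proof.
move=> q_ge0 q_sum1; set n : R := #|I|%:R.
have n_gt0 : 0 < n.
  have [i _] : exists i, true && (0 < q i).
    apply: psumr_neq0P => [i _|]; first exact: q_ge0.
    by rewrite q_sum1; apply/eqP; exact: oner_neq0.
  by rewrite ltr0n; apply/card_gt0P; exists i.
have term_le i : - (q i * ln (q i)) <= q i * ln n + n^-1 - q i.
  have [->|qi_neq0] := eqVneq (q i) 0.
    by rewrite !mul0r oppr0 add0r addr0 invr_ge0 ltW.
  have qi_gt0 : 0 < q i by rewrite lt0r qi_neq0 q_ge0.
  have nqV_gt0 : 0 < (n * q i)^-1 by rewrite invr_gt0 mulr_gt0.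
  have := ln_le_subr1 nqV_gt0.
  rewrite lnV ?lnM ?posrE ?mulr_gt0 // => ln_le.
  rewrite -addrA; have -> : n^-1 - q i = q i * ((n * q i)^-1 - 1) by field; rewrite qi_neq0 gt_eqF.
  nra.
rewrite -sumrN; apply: le_trans (ler_sum _ (fun i _ => term_le i)) _.
rewrite sumrB big_split /= -mulr_suml q_sum1 mul1r sumr_const -mulr_natr -/n.
by rewrite mulVf ?gt_eqF // addrK.
Qed.

End LogInequalities.

(* The weighted sum sum_i w_i G_i: the value of a mixture with weights w at a
   point where the components take the values G; 'mixture p g y' is by
   definition 'wsum p (fun k => g k y)'. *)
Definition wsum (R : realType) (I : finType) (w G : I -> R) : R :=
  \sum_i w i * G i.

Lemma wsum_ge_term (R : realType) (I : finType) (w G : I -> R) (i : I) :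
  (forall j, 0 <= w j * G j) -> w i * G i <= wsum w G.
Proof.
by move=> wG_ge0; rewrite /wsum (bigD1 i) //= lerDl sumr_ge0.
Qed.

Section Responsibilities.
Variables (R : realType) (I : finType) (p G : I -> R).
Hypotheses (p_ge0 : forall i, 0 <= p i) (G_ge0 : forall i, 0 <= G i).
Hypothesis mix_gt0 : 0 < wsum p G.

Definition resp (i : I) : R := p i * G i / wsum p G.

Lemma resp_ge0 i : 0 <= resp i.
Proof. by rewrite divr_ge0 ?mulr_ge0 ?p_ge0 ?G_ge0 ?ltW. Qed.

Lemma resp_sum1 : \sum_i resp i = 1.
Proof. by rewrite -mulr_suml divff ?gt_eqF. Qed.

Lemma resp_gt0 i : 0 < resp i -> 0 < p i /\ 0 < G i.
Proof.
rewrite /resp pmulr_lgt0 ?invr_gt0 // => pG_gt0.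
by split; rewrite lt0r ?p_ge0 ?G_ge0 andbT; apply: contraTneq pG_gt0 => ->;
  rewrite ?mul0r ?mulr0 ltxx.
Qed.

(* Lower bound: sum_i r_i ln (G_i / F) is a relative entropy, hence >= 0. *)
Lemma resp_lnratio_ge0 :
  \sum_i p i = 1 -> 0 <= \sum_i resp i * ln (G i / wsum p G).
Proof.
move=> p_sum1.
have term_ge i : resp i - p i <= resp i * ln (G i / wsum p G).
  have := resp_ge0 i; rewrite le0r => /orP[/eqP->|r_gt0].
    by rewrite mul0r sub0r oppr_le0.
  have [pi_gt0 Gi_gt0] := resp_gt0 r_gt0.
  have := ln_le_subr1 (divr_gt0 mix_gt0 Gi_gt0).
  rewrite !ln_div ?posrE // => ln_le.
  have -> : p i = resp i * (wsum p G / G i - 1) + resp i.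
    by rewrite /resp; field; rewrite !gt_eqF.
  nra.
apply: le_trans (ler_sum _ (fun i _ => term_ge i)).
by rewrite sumrB resp_sum1 p_sum1 subrr.
Qed.

(* Upper bound against any weight vector q that charges every component with
   positive responsibility: the quantities q_i G_i / F_q are at most 1. *)
Lemma resp_lnratio_le (q : I -> R) :
  (forall i, 0 <= q i) -> (forall i, 0 < resp i -> 0 < q i) -> 0 < wsum q G ->
  \sum_i resp i * ln (G i / wsum p G) <=
    - \sum_i resp i * ln (q i) + (ln (wsum q G) - ln (wsum p G)).
Proof.
move=> q_ge0 q_supp mixq_gt0; set c := ln (wsum q G) - ln (wsum p G).
have term_le i : resp i * ln (G i / wsum p G) <= - (resp i * ln (q i)) + resp i * c.
  have := resp_ge0 i; rewrite le0r => /orP[/eqP->|r_gt0].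
    by rewrite !mul0r oppr0 add0r.
  have [_ Gi_gt0] := resp_gt0 r_gt0; have qi_gt0 := q_supp i r_gt0.
  have post_le1 : q i * G i / wsum q G <= 1.
    by rewrite ler_pdivrMr // mul1r wsum_ge_term // => j; rewrite mulr_ge0.
  have ln_post : ln (q i * G i / wsum q G) = ln (q i) + ln (G i) - ln (wsum q G).
    by rewrite ln_div ?lnM ?posrE ?mulr_gt0.
  have := ln_le0 post_le1; rewrite ln_post => ln_post_le0.
  rewrite ln_div ?posrE // /c; nra.
apply: le_trans (ler_sum _ (fun i _ => term_le i)) _.
by rewrite big_split /= sumrN -mulr_suml resp_sum1 mul1r.
Qed.

End Responsibilities.

Lemma loglik_EFin (R : realType) (d K N : nat) (g : 'I_K -> 'rV[R]_d -> R)
  (x : 'I_N -> 'rV[R]_d) (w : 'I_K -> R) :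
  (forall n, 0 < mixture w g (x n)) ->
  loglik g x w = (\sum_(n < N) ln (mixture w g (x n)))%:E.
Proof.
move=> w_gt0; rewrite /loglik -sumEFin; apply: eq_bigr => n _.
by rewrite /elog w_gt0.
Qed.

Section AverageResponsibility.
Variables (R : realType) (d K N : nat) (g : 'I_K -> 'rV[R]_d -> R).
Variables (x : 'I_N -> 'rV[R]_d) (p : 'I_K -> R).

Definition post (n : 'I_N) (k : 'I_K) : R := resp p (fun j => g j (x n)) k.

(* ... and its average over the data, the EM update of the weights. *)
Definition avg_post (k : 'I_K) : R := N%:R^-1 * \sum_(n < N) post n k.

(* MC is the data average of sum_k r_nk ln (g_k(x_n) / f(x_n)); the convention
   for vanishing terms is automatic since then r_nk = 0. *)
Lemma MC_post : MC p g x =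
  N%:R^-1 * \sum_(n < N) \sum_(k < K) post n k * ln (g k (x n) / mixture p g (x n)).
Proof.
rewrite /MC; congr (_ * _); apply: eq_bigr => n _; apply: eq_bigr => k _.
by case: eqP => [pg0|//]; rewrite /post /resp pg0 !mul0r.
Qed.

Hypothesis N_gt0 : (0 < N)%N.
Hypotheses (g_ge0 : forall k y, 0 <= g k y) (p_ge0 : forall k, 0 <= p k).
Hypothesis mix_gt0 : forall n, 0 < mixture p g (x n).

Let Nr_gt0 : 0 < N%:R :> R. Proof. by rewrite ltr0n. Qed.

Let post_ge0 n k : 0 <= post n k.
Proof. exact: resp_ge0 p_ge0 (fun j => g_ge0 j (x n)) (mix_gt0 n) k. Qed.

Let post_sum1 n : \sum_(k < K) post n k = 1.
Proof. exact: resp_sum1 (mix_gt0 n). Qed.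

Lemma sum_post_weighted (h : 'I_K -> R) :
  \sum_(n < N) \sum_(k < K) post n k * h k = N%:R * \sum_(k < K) avg_post k * h k.
Proof.
rewrite exchange_big mulr_sumr; apply: eq_bigr => k _ /=.
by rewrite -mulr_suml /avg_post !mulrA mulfV ?mul1r ?gt_eqF.
Qed.

Lemma avg_post_simplex : in_simplex avg_post.
Proof.
split=> [k|].
  by rewrite mulr_ge0 ?invr_ge0 ?ler0n ?sumr_ge0.
rewrite -mulr_sumr exchange_big /= (eq_bigr (fun _ => 1)) => [|n _]; last exact: post_sum1.
by rewrite sumr_const card_ord mulVf ?gt_eqF.
Qed.

Lemma avg_post_gt0 n k : 0 < post n k -> 0 < avg_post k.
Proof.
move=> post_gt0; rewrite /avg_post mulr_gt0 ?invr_gt0 //.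
by rewrite (bigD1 n) //= ltr_pwDl // sumr_ge0.
Qed.

Lemma mixture_avg_post_gt0 n : 0 < mixture avg_post g (x n).
Proof.
have [k /andP[_ pg_gt0]] : exists k, true && (0 < p k * g k (x n)).
  apply: psumr_neq0P => [k _|]; first by rewrite mulr_ge0.
  by apply/eqP; rewrite gt_eqF // mix_gt0.
have post_gt0 : 0 < post n k by rewrite /post /resp divr_gt0 ?mix_gt0.
have [_ g_gt0] := resp_gt0 p_ge0 (g_ge0^~ _) (mix_gt0 n) post_gt0.
apply: lt_le_trans (wsum_ge_term k _); first by rewrite mulr_gt0 // (avg_post_gt0 post_gt0).
by move=> j; rewrite mulr_ge0 // (proj1 avg_post_simplex).
Qed.

End AverageResponsibility.

Theorem proposition3 (R : realType) (d K N : nat) (hK : (1 <= K)%N) (hN : (1 <= N)%N)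
  (g : 'I_K -> 'rV[R]_d -> R) (hg : forall k y, 0 <= g k y)
  (x : 'I_N -> 'rV[R]_d) (p : 'I_K -> R)
  (hp : in_simplex p)
  (hopt : forall p' : 'I_K -> R, in_simplex p' -> (loglik g x p' <= loglik g x p)%E)
  (hf : forall n, 0 < mixture p g (x n)) :
  0 <= MC p g x /\ MC p g x <= ln K%:R.
Proof.
have [p_ge0 p_sum1] := hp.
have Nr_gt0 : 0 < N%:R :> R by rewrite ltr0n.
set q := avg_post g x p.
have q_simplex : in_simplex q := avg_post_simplex hN hg p_ge0 hf.
have q_supp : forall n k, 0 < post g x p n k -> 0 < q k :=
  avg_post_gt0 hN hg p_ge0 hf.
have mixq_gt0 n : 0 < mixture q g (x n) := mixture_avg_post_gt0 hN hg p_ge0 hf n.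
have lik_le : \sum_(n < N) ln (mixture q g (x n)) <= \sum_(n < N) ln (mixture p g (x n)).
  by rewrite -lee_fin -!loglik_EFin //; apply: hopt.
rewrite MC_post; split.
  rewrite mulr_ge0 ?invr_ge0 ?ler0n ?sumr_ge0 // => n _.
  exact: resp_lnratio_ge0 p_ge0 (hg^~ (x n)) (hf n) p_sum1.
rewrite ler_pdivrMl //.
have point_le n := resp_lnratio_le p_ge0 (hg^~ (x n)) (hf n) (proj1 q_simplex)
  (q_supp n) (mixq_gt0 n).
apply: le_trans (ler_sum _ (fun n _ => point_le n)) _.
rewrite big_split /= sumrN (sum_post_weighted g x p hN (fun k => ln (q k))) -/q.
(* N times the entropy of q, plus the nonpositive log-likelihood gain. *)
rewrite -[X in _ <= X]addr0; apply: lerD.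
  rewrite -mulrN ler_pM2l // -[X in ln X%:R]card_ord.
  exact: (@entropy_le_ln_card R _ q (proj1 q_simplex) (proj2 q_simplex)).
by rewrite sumrB subr_le0; move: lik_le; rewrite /mixture /wsum.
Qed.
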